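(* Let $E(u,v)=\sum_{p\geq0,q\geq1}E_{p,q}(t)u^pv^q$, where $E_{p,q}(t)=\sum_{n\geq1}|\{e\in\mathbf{I}_n(\geq,\geq,-): e\text{ has parameters }(p,q)\}|\,t^n$. Then $$\Bigl(1+\frac{tv}{1-u}+\frac{tv}{1-v/u}\Bigr)E(u,v)=tuv+\frac{tv}{1-u}E(1,v)+\frac{tv}{1-v/u}E(u,u).$$
   Context: $\mathbf{I}_n$ is the set of inversion sequences $e=(e_1,\ldots,e_n)$ with $0\leq e_i<i$; $\mathbf{I}_n(\geq,\geq,-)$ is the set of $e\in\mathbf{I}_n$ with no $i<j<k$ such that $e_i\geq e_j\geq e_k$. An entry $e_i$ is a left-to-right maximum if $e_i>e_j$ for all $j<i$. Let $\alpha(e)=\max_i e_i$ and $\beta(e)$ the largest element of $\{e_i: e_i\text{ not a left-to-right maximum}\}\cup\{-1\}$. The parameters of $e\in\mathbf{I}_n(\geq,\geq,-)$ are $(p,q)=(\alpha(e)-\beta(e),\,n-\alpha(e))$. $E(u,v)$ is a formal power series in $t$ whose coefficients are polynomials in $u,v$. *)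

From HB Require Import structures.
From mathcomp Require Import all_boot all_order all_algebra.
From mathcomp Require Import fraction.
Set Implicit Arguments. Unset Strict Implicit. Unset Printing Implicit Defensive.
Import Order.TTheory GRing.Theory Num.Theory.

(* Inversion sequences of length n, 0-indexed: e = (e_0,...,e_{n-1}) with
   e_i <= i (i.e. the paper's 0 <= e_{i+1} < i+1).  Entries are stored in 'I_n. *)
Definition inv_seq n (e : n.-tuple 'I_n) : bool :=
  [forall i : 'I_n, (tnth e i <= i)%N].

Definition avoids_gege n (e : n.-tuple 'I_n) : bool :=
  [forall i : 'I_n, forall j : 'I_n, forall k : 'I_n,
     ((i < j)%N && (j < k)%N) ==>
     ~~ ((tnth e j <= tnth e i)%N && (tnth e k <= tnth e j)%N)].

Definition ltrmax n (e : n.-tuple 'I_n) (i : 'I_n) : bool :=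
  [forall j : 'I_n, (j < i)%N ==> (tnth e j < tnth e i)%N].

Definition alpha n (e : n.-tuple 'I_n) : nat := \max_(i : 'I_n) tnth e i.

Definition beta n (e : n.-tuple 'I_n) : int :=
  if [exists i : 'I_n, ~~ ltrmax e i]
  then Posz (\max_(i : 'I_n | ~~ ltrmax e i) tnth e i)%N
  else (-1)%R.

Definition pparam n (e : n.-tuple 'I_n) : int := (Posz (alpha e) - beta e)%R.
Definition qparam n (e : n.-tuple 'I_n) : int := (Posz n - Posz (alpha e))%R.

Local Open Scope ring_scope.

(* Coefficient of t^n in E(x,y):  E_n(x,y) = sum_{p,q} #{e in I_n(>=,>=,-) with
   parameters (p,q)} x^p y^q, for n >= 1; the series starts at n = 1. *)
Definition Ecoef (F : fieldType) (x y : F) (n : nat) : F :=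
  if n is 0 then 0 else
  \sum_(e : n.-tuple 'I_n | inv_seq e && avoids_gege e)
      x ^ pparam e * y ^ qparam e.

(* The field of rational functions in u, v over Q, with indeterminates u, v. *)
Definition RF := {fraction {poly {poly rat}}}.
Definition uu : RF := FracField.tofrac (('X : {poly rat})%:P).
Definition vv : RF := FracField.tofrac ('X : {poly {poly rat}}).

Definition Etrunc (x y : RF) (N : nat) : {poly RF} := \poly_(n < N) Ecoef x y n.

From mathcomp Require Import all_boot all_algebra fraction.
From mathcomp Require Import ring zify.
Set Implicit Arguments. Unset Strict Implicit. Unset Printing Implicit Defensive.
Import GRing.Theory.

(* Deleting the last entry z of an e' in I_{n+1}(>=,>=,-) leaves an e in
   I_n(>=,>=,-), and z is allowed exactly when it exceeds every entry of e that
   is not a left-to-right maximum, i.e. beta e < z <= n.  If z <= alpha e the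
   parameters of e' are (alpha e - z, q + 1); if z > alpha e they are
   (z - beta e, n + 1 - z).  Summing over z, each e of weight u^p v^q
   contributes two geometric sums, which telescope into the two rational
   terms of the functional equation, coefficient by coefficient in t. *)

Section AlphaBeta.

Variable n : nat.
Implicit Type e : n.-tuple 'I_n.

(* beta e + 1 as a natural number; it is 0 when beta e = -1. *)
Definition betaS e : nat := \max_(i | ~~ ltrmax e i) (tnth e i).+1.

Definition weight (F : fieldType) (x y : F) e : F :=
  (x ^ pparam e * y ^ qparam e)%R.

Lemma alpha_leq e : alpha e <= n.
Proof. by apply/bigmax_leqP => i _; apply: ltnW. Qed.

Lemma leq_tnth_alpha e i : tnth e i <= alpha e.
Proof. exact: (@leq_bigmax _ (fun i => nat_of_ord (tnth e i))). Qed.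

Lemma betaS_leq_alphaS e : betaS e <= (alpha e).+1.
Proof. by apply/bigmax_leqP => i _; rewrite ltnS leq_tnth_alpha. Qed.

Lemma betaE e : beta e = (Posz (betaS e) - 1)%R.
Proof.
rewrite /beta /betaS; case: existsP => [[i0 nmax_i0]|noP]; last first.
  by rewrite big_pred0 // => i; apply/negbTE/negP => Hi; apply: noP; exists i.
have [i1 Hi1 max_i1] := @eq_bigmax_cond _ (fun i => ~~ ltrmax e i)
  (fun i => nat_of_ord (tnth e i)) (ltac:(by apply/card_gt0P; exists i0)).
have {}Hi1 : ~~ ltrmax e i1 := Hi1.
have le_i1 i : ~~ ltrmax e i -> tnth e i <= tnth e i1.
  by move=> Hi; rewrite -max_i1; apply: (@leq_bigmax_cond _ (fun i => ~~ ltrmax e i)).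
have -> : \max_(i | ~~ ltrmax e i) (tnth e i).+1 = (tnth e i1).+1.
  apply/eqP; rewrite eqn_leq (@leq_bigmax_cond _ _ (fun i => (tnth e i).+1) _ Hi1).
  by rewrite andbT; apply/bigmax_leqP => i /le_i1.
by rewrite max_i1 -addn1 PoszD addrK.
Qed.

Lemma weightE (F : fieldType) (x y : F) e :
  weight x y e = (x ^+ ((alpha e).+1 - betaS e) * y ^+ (n - alpha e))%R.
Proof.
rewrite /weight /pparam /qparam betaE subzn ?alpha_leq //.
have le_betaS := betaS_leq_alphaS e.
by have -> : (Posz (alpha e) - (Posz (betaS e) - 1))%R
           = Posz ((alpha e).+1 - betaS e) by lia.
Qed.

End AlphaBeta.

Section Extension.

Variable k : nat.

Definition wid (i : 'I_k.+1) : 'I_k.+2 := widen_ord (leqnSn _) i.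

Definition extend (e : k.+1.-tuple 'I_k.+1) (z : 'I_k.+2) : k.+2.-tuple 'I_k.+2 :=
  [tuple if i < k.+1 then wid (tnth e (inord i)) else z | i < k.+2].

Definition restrict (e' : k.+2.-tuple 'I_k.+2) : k.+1.-tuple 'I_k.+1 :=
  [tuple inord (tnth e' (wid j)) | j < k.+1].

Lemma ordS_split (i : 'I_k.+2) : {j : 'I_k.+1 | i = wid j} + {i = ord_max}.
Proof.
case: (unliftP ord_max i) => [j ->|->]; last by right.
by left; exists j; apply: val_inj; rewrite /= /bump leqNgt ltn_ord.
Qed.

Lemma wid_of_ltn (i j : 'I_k.+2) : i < j -> {i0 : 'I_k.+1 | i = wid i0}.
Proof.
case: (ordS_split i) => [//|-> /=]; by rewrite ltnNge -ltnS ltn_ord.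
Qed.

Lemma forall_ordS (P : pred 'I_k.+2) :
  [forall i, P i] = [forall j, P (wid j)] && P ord_max.
Proof.
apply/forallP/andP => [P_all|[/forallP P_wid P_max] i].
  by split => //; apply/forallP.
by case: (ordS_split i) => [[j ->]|->].
Qed.

Variables (e : k.+1.-tuple 'I_k.+1) (z : 'I_k.+2).

Lemma tnth_extend_wid j : tnth (extend e z) (wid j) = wid (tnth e j).
Proof. by rewrite tnth_mktuple /= ltn_ord inord_val. Qed.

Lemma tnth_extend_max : tnth (extend e z) ord_max = z.
Proof. by rewrite tnth_mktuple /= ltnn. Qed.

Lemma ltrmax_extend_wid i : ltrmax (extend e z) (wid i) = ltrmax e i.
Proof.
rewrite /ltrmax forall_ordS /= ltnNge leqW /= ?andbT; last exact: (ltn_ord i).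
by apply: eq_forallb => j; rewrite !tnth_extend_wid.
Qed.

Lemma ltrmax_extend_max : ltrmax (extend e z) ord_max = (alpha e < z).
Proof.
rewrite /ltrmax forall_ordS /= ltnn andbT tnth_extend_max.
have [i0 _ max_i0] := @eq_bigmax_cond _ xpredT (fun i => nat_of_ord (tnth e i))
  (ltac:(by rewrite card_ord)).
have {}max_i0 : alpha e = tnth e i0 := max_i0.
apply/forallP/idP => [/(_ i0)|lt_alpha j].
  by rewrite ltn_ord tnth_extend_wid max_i0.
by rewrite ltn_ord tnth_extend_wid; apply: leq_ltn_trans (leq_tnth_alpha e j) _.
Qed.

Lemma alpha_extend : alpha (extend e z) = maxn (alpha e) z.
Proof.
rewrite /alpha big_ord_recr /= tnth_extend_max; congr maxn.
by apply: eq_bigr => i _; rewrite -[widen_ord _ i]/(wid i) tnth_extend_wid.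
Qed.

Lemma betaS_extend :
  betaS (extend e z) = maxn (betaS e) (if alpha e < z then 0 else z.+1).
Proof.
rewrite /betaS big_mkcond big_ord_recr /= -[ord_max]/(@ord_max k.+1).
rewrite ltrmax_extend_max tnth_extend_max; congr maxn; last by case: ltnP.
rewrite [RHS]big_mkcond; apply: eq_bigr => i _.
by rewrite -[widen_ord _ i]/(wid i) ltrmax_extend_wid tnth_extend_wid.
Qed.

Lemma inv_seq_extend : inv_seq (extend e z) = inv_seq e.
Proof.
rewrite /inv_seq forall_ordS tnth_extend_max -ltnS ltn_ord andbT.
by apply: eq_forallb => j; rewrite tnth_extend_wid.
Qed.

Lemma extendK : restrict (extend e z) = e.
Proof.
by apply: eq_from_tnth => j; rewrite tnth_mktuple tnth_extend_wid /= inord_val.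
Qed.

Lemma betaS_leqP (m : nat) :
  reflect (forall i j : 'I_k.+1, j < i -> tnth e i <= tnth e j -> tnth e i < m)
          (betaS e <= m).
Proof.
apply: (iffP idP) => [/bigmax_leqP le_m i j lt_ji le_ij|lt_m].
  by apply: le_m; apply/forallPn; exists j; rewrite lt_ji -leqNgt.
apply/bigmax_leqP => i /forallPn [j].
by rewrite negb_imply -leqNgt => /andP[]; apply: lt_m.
Qed.

Lemma avoids_gege_extend :
  avoids_gege (extend e z) = avoids_gege e && (betaS e <= z).
Proof.
apply/idP/andP => [avoid_ez|[avoid_e le_z]].
  split.
    apply/forallP => i; apply/forallP => j; apply/forallP => l.
    have := forallP (forallP (forallP avoid_ez (wid i)) (wid j)) (wid l).
    by rewrite !tnth_extend_wid.
  apply/betaS_leqP => j i lt_ij le_ji.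
  have := forallP (forallP (forallP avoid_ez (wid i)) (wid j)) ord_max.
  by rewrite !tnth_extend_wid tnth_extend_max /= lt_ij ltn_ord le_ji -ltnNge.
apply/forallP => i; apply/forallP => j; apply/forallP => l.
apply/implyP => /andP[lt_ij lt_jl].
have [j0 Ej] := wid_of_ltn lt_jl; have [i0 Ei] := wid_of_ltn lt_ij.
subst i j; move: lt_ij lt_jl => /= lt_ij.
case: (ordS_split l) => [[l0 ->] /= lt_jl|-> _].
  rewrite !tnth_extend_wid.
  by have := forallP (forallP (forallP avoid_e i0) j0) l0; rewrite lt_ij lt_jl.
rewrite !tnth_extend_wid tnth_extend_max /= negb_and -!ltnNge.
case: leqP => [le_ji|_]; rewrite ?orbT //=.
exact: (betaS_leqP _ le_z _ _ lt_ij le_ji).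
Qed.

End Extension.

Lemma restrictK k (e' : k.+2.-tuple 'I_k.+2) :
  inv_seq e' -> extend (restrict e') (tnth e' ord_max) = e'.
Proof.
move=> /forallP inv_e'; apply: eq_from_tnth => i.
case: (ordS_split i) => [[j ->]|->]; last by rewrite tnth_extend_max.
rewrite tnth_extend_wid tnth_mktuple; apply: val_inj => /=.
by rewrite inordK //; apply: leq_ltn_trans (inv_e' (wid j)) (ltn_ord j).
Qed.

Local Open Scope ring_scope.

Lemma Ecoef_extend (F : fieldType) (x y : F) k :
  Ecoef x y k.+2 = \sum_(e : k.+1.-tuple 'I_k.+1 | inv_seq e && avoids_gege e)
                     \sum_(z : 'I_k.+2 | (betaS e <= z)%N) weight x y (extend e z).
Proof.
rewrite /Ecoef (partition_big (@restrict k) (fun e => inv_seq e && avoids_gege e)).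
  apply: eq_bigr => e /andP[inv_e avoid_e].
  rewrite (reindex_onto (extend e) (fun e' => tnth e' ord_max)); last first.
    by move=> e' /andP[/andP[inv_e' _] /eqP <-]; apply: restrictK.
  apply: eq_bigl => z.
  rewrite inv_seq_extend avoids_gege_extend extendK tnth_extend_max !eqxx.
  by rewrite inv_e avoid_e !andbT.
move=> e' /andP[inv_e' avoid_e'].
have ext_e' := restrictK inv_e'.
rewrite -ext_e' inv_seq_extend in inv_e'; rewrite inv_e'.
by rewrite -ext_e' avoids_gege_extend in avoid_e'; case/andP: avoid_e' => ->.
Qed.

Section ExtensionWeight.

Variables (F : fieldType) (x y : F) (k : nat) (e : k.+1.-tuple 'I_k.+1).

Lemma weight_extend_low (z : 'I_k.+2) : (betaS e <= z <= alpha e)%N ->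
  weight x y (extend e z) = x ^+ (alpha e - z) * y ^+ (k.+2 - alpha e).
Proof.
case/andP=> le_betaS le_alpha.
rewrite weightE alpha_extend betaS_extend ltnNge le_alpha /=.
by rewrite (maxn_idPl le_alpha) (maxn_idPr (leqW le_betaS)) subSS.
Qed.

Lemma weight_extend_high (z : 'I_k.+2) : (alpha e < z)%N ->
  weight x y (extend e z) = x ^+ (z.+1 - betaS e) * y ^+ (k.+2 - z).
Proof.
move=> lt_alpha.
by rewrite weightE alpha_extend betaS_extend lt_alpha maxn0 (maxn_idPr (ltnW lt_alpha)).
Qed.

End ExtensionWeight.

Lemma sum_weight_extend (F : fieldType) (x y : F) k (e : k.+1.-tuple 'I_k.+1) :
  \sum_(z : 'I_k.+2 | (betaS e <= z)%N) weight x y (extend e z) =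
    (\sum_(betaS e <= z < (alpha e).+1) x ^+ (alpha e - z)) * y ^+ (k.+2 - alpha e)
  + \sum_((alpha e).+1 <= z < k.+2) x ^+ (z.+1 - betaS e) * y ^+ (k.+2 - z).
Proof.
pose w z := if (z <= alpha e)%N then x ^+ (alpha e - z) * y ^+ (k.+2 - alpha e)
            else x ^+ (z.+1 - betaS e) * y ^+ (k.+2 - z).
rewrite (eq_bigr (fun z : 'I_k.+2 => w z)); last first.
  move=> z le_z; rewrite /w; case: leqP => [le_alpha|lt_alpha].
    by rewrite weight_extend_low ?le_z.
  by rewrite weight_extend_high.
rewrite (eq_bigl (fun z : 'I_k.+2 => xpredT z && (betaS e <= z)%N)) //.
rewrite -(big_geq_mkord (betaS e) k.+2 xpredT w) (@big_cat_nat _ _ _ (alpha e).+1).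
- rewrite mulr_suml; congr (_ + _); apply: eq_big_nat => z /andP[ge_z lt_z].
    by rewrite /w -ltnS lt_z.
  by rewrite /w leqNgt ge_z.
- exact: betaS_leq_alphaS.
- by rewrite ltnS alpha_leq.
Qed.

Lemma geometric_telescope (R : comRingType) (u : R) (m A : nat) : (m <= A.+1)%N ->
  (1 - u) * \sum_(m <= z < A.+1) u ^+ (A - z) = 1 - u ^+ (A.+1 - m).
Proof.
move eq_d : (A.+1 - m)%N => d; elim: d m eq_d => [|d IH] m eq_d le_m.
  have -> : m = A.+1 by lia.
  by rewrite big_geq // mulr0 expr0 subrr.
rewrite big_ltn; last by lia.
rewrite mulrDr IH; [|lia..].
have -> : (A - m = d)%N by lia.
by rewrite exprS; ring.
Qed.

Lemma bigeometric_telescope (R : comRingType) (u v : R) (m lo hi : nat) :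
  (m <= lo <= hi)%N ->
  (u - v) * \sum_(lo <= z < hi) u ^+ (z.+1 - m) * v ^+ (hi - z)
    = v * u ^+ (lo.+1 - m) * (u ^+ (hi - lo) - v ^+ (hi - lo)).
Proof.
move eq_d : (hi - lo)%N => d; elim: d lo eq_d => [|d IH] lo eq_d /andP[le_m le_hi].
  have -> : lo = hi by lia.
  by rewrite big_geq // mulr0 subrr mulr0.
rewrite big_ltn; last by lia.
rewrite mulrDr IH; [|lia..].
have -> : (lo.+2 - m = (lo.+1 - m).+1)%N by lia.
have -> : (hi - lo = d.+1)%N by lia.
by rewrite !exprS; ring.
Qed.

Lemma Ecoef1 (F : fieldType) (x y : F) : Ecoef x y 1 = x * y.
Proof.
have ord1_0 (i : 'I_1) : nat_of_ord i = 0%N by case: i => -[].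
have all_valid (e : 1.-tuple 'I_1) : inv_seq e && avoids_gege e.
  by apply/andP; split; do ![apply/forallP => ?]; rewrite !ord1_0.
have weight1 (e : 1.-tuple 'I_1) : weight x y e = x * y.
  rewrite weightE.
  have -> : alpha e = 0%N.
    by apply/eqP; rewrite -leqn0; apply/bigmax_leqP => i _; rewrite ord1_0.
  have -> : betaS e = 0%N.
    rewrite /betaS big_pred0 // => i; apply/negbTE; rewrite negbK.
    by apply/forallP => j; rewrite !ord1_0.
  by rewrite !expr1.
rewrite /Ecoef (eq_bigl xpredT); last exact: all_valid.
rewrite (eq_bigr (fun _ => x * y)); last by move=> e _; apply: weight1.
by rewrite sumr_const cardT -cardT card_tuple card_ord.
Qed.

Section Recurrence.

Variables (F : fieldType) (u v : F).
Hypotheses (u_neq0 : u != 0) (u_neq1 : u != 1) (u_neqv : u != v).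

Let a := v / (1 - u).
Let b := v / (1 - v / u).

Lemma sum_weight_extend_eq k (e : k.+1.-tuple 'I_k.+1) :
  \sum_(z : 'I_k.+2 | (betaS e <= z)%N) weight u v (extend e z)
    + a * weight u v e + b * weight u v e
  = a * weight 1 v e + b * weight u u e.
Proof.
have le_betaS := betaS_leq_alphaS e; have le_alpha := alpha_leq e.
have le_range : (betaS e <= (alpha e).+1 <= k.+2)%N by rewrite le_betaS ltnS le_alpha.
have low := geometric_telescope u le_betaS.
have high := bigeometric_telescope u v le_range.
rewrite sum_weight_extend !weightE expr1n.
move: low high; rewrite subSS.
have -> : ((alpha e).+2 - betaS e = ((alpha e).+1 - betaS e).+1)%N by lia.
have -> : (k.+2 - alpha e = (k.+1 - alpha e).+1)%N by lia.
set S1 := \sum_(_ <= _ < _) _; set S2 := \sum_(_ <= _ < _) _.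
set P := ((alpha e).+1 - betaS e)%N; set Q := (k.+1 - alpha e)%N.
have subr1u_neq0 : 1 - u != 0 by rewrite subr_eq0 eq_sym.
have subruv_neq0 : u - v != 0 by rewrite subr_eq0.
move=> /(canRL (mulKf subr1u_neq0)) -> /(canRL (mulKf subruv_neq0)) ->.
rewrite /a /b !exprS; field.
by rewrite subruv_neq0 u_neq0 subr1u_neq0.
Qed.

Lemma Ecoef_recurrence m :
  Ecoef u v m.+1 + a * Ecoef u v m + b * Ecoef u v m
  = (m == 0)%:R * (u * v) + a * Ecoef 1 v m + b * Ecoef u u m.
Proof.
case: m => [|k].
  by rewrite Ecoef1 /Ecoef !mulr0 !addr0 mul1r.
rewrite Ecoef_extend mul0r add0r /Ecoef !mulr_sumr -!big_split.
by apply: eq_bigr => e _; apply: sum_weight_extend_eq.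
Qed.

End Recurrence.

Lemma coef_poly_recurrence (R : ringType) (a b c : R) (f f1 f2 : nat -> R) (N n : nat) :
  (n < N)%N -> f 0%N = 0 ->
  (forall m, f m.+1 + a * f m + b * f m = (m == 0)%:R * c + a * f1 m + b * f2 m) ->
  ((1 + 'X * a%:P + 'X * b%:P) * \poly_(i < N) f i)`_n
  = ('X * c%:P + 'X * a%:P * \poly_(i < N) f1 i + 'X * b%:P * \poly_(i < N) f2 i)`_n.
Proof.
move=> lt_nN f0 rec_f.
rewrite !mulrDl mul1r !coefD -!mulrA !coefXM !coefCM coefC !coef_poly lt_nN.
case: n lt_nN => [|m] lt_mN /=; first by rewrite f0 !addr0.
by rewrite (ltnW lt_mN) rec_f; case: m {lt_mN} => [|m]; rewrite ?mul1r ?mul0r.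
Qed.

Lemma uu_neq0 : uu != 0.
Proof. by rewrite tofrac_eq0 polyC_eq0 polyX_eq0. Qed.

Lemma uu_neq1 : uu != 1.
Proof.
rewrite -(rmorph1 (@FracField.tofrac _)) tofrac_eq -polyC1 (inj_eq polyC_inj).
by rewrite -subr_eq0 -polyC1 polyXsubC_eq0.
Qed.

Lemma uu_neqvv : uu != vv.
Proof. by rewrite tofrac_eq eq_sym -subr_eq0 polyXsubC_eq0. Qed.

Theorem proposition2p3 (N n : nat) : (n < N)%N ->
  ((1 + 'X * (vv / (1 - uu))%:P + 'X * (vv / (1 - vv / uu))%:P)
     * Etrunc uu vv N)`_n
  = ('X * (uu * vv)%:P
     + 'X * (vv / (1 - uu))%:P * Etrunc 1 vv N
     + 'X * (vv / (1 - vv / uu))%:P * Etrunc uu uu N)`_n.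
Proof.
move=> lt_nN; apply: coef_poly_recurrence => //.
exact: (Ecoef_recurrence uu_neq0 uu_neq1 uu_neqvv).
Qed.
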